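(* Let $m \equiv 3 \pmod 4$ with $m > 3$, $n = 3^m - 1$, $v = (3^{(m+1)/2}+1)/2$ and $\delta = (3^{(m-1)/2}+7)/2$. Then $\gcd(v,n) = 1$, and, setting $T_{(2,3,m)}(v) = \{ vi \bmod n : i \in T_{(2,3,m)}\}$, we have $\{n-(\delta-1), \ldots, n-2, n-1\} \subseteq T_{(2,3,m)}(v)$.
   Context: For an integer $0 \le j \le n-1$ with $3$-adic expansion $j = \sum_{t=0}^{m-1} j_t 3^t$, $j_t \in \{0,1,2\}$, let $w_3(j) = \sum_{t=0}^{m-1} j_t$. For distinct $i_1,i_2 \in \{0,1,2,3\}$, $T_{(i_1,i_2,m)} = \{1 \le j \le n-1 : w_3(j) \equiv i_1 \text{ or } i_2 \pmod 4\}$. For an integer $b$, $b \bmod n$ is the unique $b_0 \in \{0,\ldots,n-1\}$ with $b \equiv b_0 \pmod n$. *)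

From mathcomp Require Import all_boot.
Set Implicit Arguments. Unset Strict Implicit. Unset Printing Implicit Defensive.

Fixpoint digsum3 (fuel j : nat) : nat :=
  match fuel with
  | 0 => 0
  | f.+1 => j %% 3 + digsum3 f (j %/ 3)
  end.

(* w_3(j): sum of the 3-adic digits of j (fuel j suffices since j %/ 3 < j for j > 0). *)
Definition w3 (j : nat) : nat := digsum3 j j.

Definition T_set (i1 i2 m : nat) : pred nat :=
  fun j => (1 <= j <= 3 ^ m - 2) && ((w3 j %% 4 == i1) || (w3 j %% 4 == i2)).

From mathcomp Require Import all_boot zify ring.

Set Implicit Arguments.
Unset Strict Implicit.

(* Write P = 3^h = 2p + 1 with h odd, so that m = 2h + 1, n = 3P^2 - 1 and
   2v = 3P + 1.  Split a candidate i into base-3 blocks,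
   i = X 3^(h+1) + d 3^h + Y with Y < P.  If the outer blocks are complementary
   (X + Y = P - 1) the digit sum of i is 2h + d, i.e. 2 + d modulo 4, and
   3P^2 = 1 modulo n makes v i modulo n explicit: d = 0 with X odd reaches
   n - r for every even r <= 2p, and d = 1 with X even for every odd r <= p.
   The remaining r = p + 2 comes from X = P - 2, d = 2, Y = 0, of digit sum
   2h + 1.  As p is odd and p + 3 <= 2p, this covers 1 <= r <= p + 3 = delta - 1.
   Finally 3n + 2 = 4(3p + 1)v with v odd, so gcd(v, n) = 1. *)

Lemma digsum3_fuel f g j : j <= f -> j <= g -> digsum3 f j = digsum3 g j.
Proof.
have digsum3_0 f' : digsum3 f' 0 = 0 by elim: f' => //= f' ->.
elim: f g j => [|f IHf] [|g] j //= jf jg;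
  try by (have -> : j = 0 by lia); rewrite mod0n div0n digsum3_0.
by congr (_ + _); apply: IHf; have := leq_div j 3; lia.
Qed.

Lemma w3_rec j : w3 j = j %% 3 + w3 (j %/ 3).
Proof.
case: j => [//|j]; rewrite /w3 /=; congr (_ + _).
by apply: digsum3_fuel => //; have := leq_div j.+1 3; lia.
Qed.

Lemma w3_digit a d : d < 3 -> w3 (3 * a + d) = d + w3 a.
Proof. by move=> d3; rewrite w3_rec; congr (_ + w3 _); lia. Qed.

Lemma w3_cat k a b : b < 3 ^ k -> w3 (a * 3 ^ k + b) = w3 a + w3 b.
Proof.
elim: k b => [|k IHk] b.
  by rewrite expn0 ltnS leqn0 => /eqP ->; rewrite muln1 !addn0.
rewrite expnS => bk; rewrite w3_rec [w3 b]w3_rec addnCA -IHk; last by lia.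
by congr (_ + w3 _); lia.
Qed.

Lemma w3_complement k x y : x + y = 3 ^ k - 1 -> w3 x + w3 y = 2 * k.
Proof.
elim: k x y => [|k IHk] x y.
  by rewrite expn0 => /eqP; rewrite addn_eq0 => /andP[/eqP-> /eqP->].
have := expn_gt0 3 k; rewrite expnS w3_rec [w3 y]w3_rec => k_gt0 xyk.
by have := IHk (x %/ 3) (y %/ 3); lia.
Qed.

Lemma odd_halfE n : odd n -> n = 2 * n./2 + 1.
Proof. by move=> n_odd; rewrite -[n in LHS]odd_double_half n_odd -mul2n addnC. Qed.

Lemma modn_eq_sub x r c n : x + r = c * n -> 0 < r <= n -> x %% n = n - r.
Proof.
case: c => [|c]; first by lia.
rewrite mulSn => xrn rn; have -> : x = c * n + (n - r) by lia.
by rewrite modnMDl modn_small //; lia.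
Qed.

Lemma w3_blocks h X d Y : d < 3 -> Y < 3 ^ h ->
  w3 (X * 3 ^ h.+1 + (d * 3 ^ h + Y)) = w3 X + d + w3 Y.
Proof.
move=> d3 Yh.
by rewrite expnS mulnA addnA -mulnDl w3_cat // mulnC w3_digit // [d + _]addnC.
Qed.

Section Witnesses.

Variables h p : nat.
Hypothesis pow3h : 3 ^ h = 2 * p + 1.
Hypothesis odd_h : odd h.

Local Notation n := (12 * p ^ 2 + 12 * p + 2).
Local Notation v := (3 * p + 2).
Local Notation in_Tv k := (exists i, T_set 2 3 (2 * h + 1) i /\ k = (v * i) %% n).

Lemma pow3_succ : 3 ^ h.+1 = 3 * (2 * p + 1).
Proof. by rewrite expnS pow3h. Qed.

Lemma pow3_double_succ : 3 ^ (2 * h + 1) = n + 1.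
Proof. by rewrite expnD (mulnC 2) expnM pow3h expn1; ring. Qed.

Lemma odd_half_pow3 : odd p.
Proof.
have : 3 ^ h %% 4 = 3.
  by rewrite (odd_halfE odd_h) expnD expnM -modnMml -modnXm (_ : 3 ^ 2 %% 4 = 1) // exp1n.
rewrite pow3h -[p]odd_double_half; case: (odd p) => //; lia.
Qed.

Lemma in_Tv_witness i c d r : 0 < i < n -> w3 i = 2 * h + d -> d < 2 ->
  v * i + r = c * n -> 0 < r <= n -> in_Tv (n - r).
Proof.
move=> i_range w3i d2 vir r_range.
exists i; split; last by rewrite (modn_eq_sub vir r_range).
by rewrite /T_set pow3_double_succ w3i (odd_halfE odd_h); lia.
Qed.

Lemma in_Tv_even x y : p = x + y + 1 -> in_Tv (n - (2 * y + 2)).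
Proof.
move=> pxy.
apply: (@in_Tv_witness ((2 * x + 1) * 3 ^ h.+1 + (0 * 3 ^ h + (2 * y + 1))) (3 * x + 2) 0).
- rewrite pow3_succ pxy; nia.
- rewrite w3_blocks //; last by rewrite pow3h; lia.
  by rewrite !addn0 (@w3_complement h) // pow3h; lia.
- by [].
- by rewrite pow3_succ pxy; ring.
- by rewrite pxy; nia.
Qed.

Lemma in_Tv_odd s u : p = 2 * (s + u) + 1 -> in_Tv (n - (2 * s + 1)).
Proof.
move=> psu.
apply: (@in_Tv_witness (2 * u * 3 ^ h.+1 + (1 * 3 ^ h + (4 * s + 2 * u + 2))) (3 * u + 1) 1).
- rewrite pow3_succ psu; nia.
- rewrite w3_blocks //; last by rewrite pow3h; lia.
  by rewrite addnAC (@w3_complement h) // pow3h; lia.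
- by [].
- by rewrite pow3_succ pow3h psu; ring.
- by rewrite psu; nia.
Qed.

(* The d = 1 witness for X = -2, shifted by n. *)
Lemma in_Tv_edge k : p = k + 1 -> in_Tv (n - (p + 2)).
Proof.
move=> pk.
apply: (@in_Tv_witness ((2 * k + 1) * 3 ^ h.+1 + (2 * 3 ^ h + 0)) (3 * p) 1).
- rewrite pow3_succ pk; nia.
- rewrite w3_blocks ?expn_gt0 // -(@w3_complement h (2 * k + 1) 1); last first.
    by rewrite pow3h; lia.
  by change (w3 0) with 0; change (w3 1) with 1; lia.
- by [].
- by rewrite pow3_succ pow3h pk; ring.
- by nia.
Qed.

Lemma in_Tv_top r : 1 < h -> 0 < r <= p + 3 -> in_Tv (n - r).
Proof.
move=> h_gt1 r_range.
have p_ge4 : 4 <= p.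
  have : 3 ^ 2 <= 3 ^ h by rewrite leq_exp2l.
  by rewrite pow3h; lia.
have p_odd := odd_halfE odd_half_pow3.
have [[y ry] | [s rs]] : (exists y, r = 2 * y + 2) \/ (exists s, r = 2 * s + 1).
  have := odd_double_half r; case: (odd r) => /= r_half.
    by right; exists r./2; lia.
  by left; exists (r./2 - 1); lia.
- by rewrite ry; apply: (@in_Tv_even (p - y - 1)); lia.
- have [s_le | s_gt] := leqP s p./2.
    by rewrite rs; apply: (@in_Tv_odd s (p./2 - s)); lia.
  have -> : r = p + 2 by lia.
  by apply: (@in_Tv_edge (p - 1)); lia.
Qed.

Lemma coprime_v_n : coprime v n.
Proof.
have v_2 : coprime v 2 by rewrite coprimen2 oddD oddM odd_half_pow3.
have d_2 : gcdn v n %| 2.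
  have : gcdn v n %| (12 * p + 4) * v by apply/dvdn_mull/dvdn_gcdl.
  rewrite (_ : (12 * p + 4) * v = 3 * n + 2); last by ring.
  by rewrite (dvdn_addr _ (dvdn_mull 3 (dvdn_gcdr v n))).
have : gcdn v n %| gcdn v 2 by rewrite dvdn_gcd dvdn_gcdl d_2.
by rewrite (eqP v_2) dvdn1.
Qed.

End Witnesses.

Theorem lemma8 (m : nat) :
  m %% 4 = 3 -> 3 < m ->
  let n := 3 ^ m - 1 in
  let v := (3 ^ ((m + 1) %/ 2) + 1) %/ 2 in
  let delta := (3 ^ ((m - 1) %/ 2) + 7) %/ 2 in
  coprime v n /\
  (forall k, n - (delta - 1) <= k <= n - 1 ->
     exists i, T_set 2 3 m i /\ k = (v * i) %% n).
Proof.
move=> m3 m_gt3; rewrite /=.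
have [q m_eq] : exists q, m = 2 * (2 * q + 1) + 1 by exists (m %/ 4); lia.
set h := 2 * q + 1 in m_eq.
have odd_h : odd h by rewrite /h oddD oddM.
have [p pow3h] : exists p, 3 ^ h = 2 * p + 1.
  by exists (3 ^ h)./2; rewrite -odd_halfE // oddX orbT.
have -> : 3 ^ m - 1 = 12 * p ^ 2 + 12 * p + 2 by rewrite m_eq (pow3_double_succ pow3h); lia.
have -> : (3 ^ ((m + 1) %/ 2) + 1) %/ 2 = 3 * p + 2.
  by rewrite (_ : (m + 1) %/ 2 = h.+1) ?(pow3_succ pow3h); lia.
have -> : (3 ^ ((m - 1) %/ 2) + 7) %/ 2 = p + 4.
  by rewrite (_ : (m - 1) %/ 2 = h) ?pow3h; lia.
split; first exact: coprime_v_n pow3h odd_h.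
move=> k k_range; have h_gt1 : 1 < h by lia.
have [|i [Ti vi]] := in_Tv_top pow3h odd_h (r := 12 * p ^ 2 + 12 * p + 2 - k) h_gt1.
  by lia.
by exists i; rewrite m_eq; split => //; lia.
Qed.
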